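(* Let $\mathbb{K}$ be a field, $n>1$, $a=\sum_{j=0}^d c_j s^j\in\mathbb{K}[s]^n$ a non-zero row vector of degree $d$, and $A\in\mathbb{K}^{(2d+1)\times n(d+1)}$ the matrix whose $(i,\,kn+r)$ entry ($1\le i\le 2d+1$, $0\le k\le d$, $1\le r\le n$) is the $r$-th entry of $c_{i-1-k}$ (zero if $i-1-k\notin\{0,\dots,d\}$). Let $p$, $q$, $\tilde q$, $b_i$ ($i\in q$) be as in the context. Then for any $\iota\in\tilde q$ and any integer $k$ with $0\le k\le\left\lfloor\frac{n(d+1)-\iota}{n}\right\rfloor$, $$b_{\iota+kn}^\flat=s^k\,b_\iota^\flat+\sum_{\{j\in p\,\mid\, j<\iota,\ j+kn\in q\}}\alpha_j\,b_{j+kn}^\flat,$$ where the constants $\alpha_j\in\mathbb{K}$ are those in the expression $A_{*\iota}=\sum_{\{j\in p\mid j<\iota\}}\alpha_jA_{*j}$ of the $\iota$-th column of $A$ as a linear combination of the preceding pivotal columns.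
   Context: $A_{*j}$ is the $j$-th column of $A$. A column of a matrix is pivotal if it is either the first column and non-zero, or linearly independent of all previous columns; otherwise non-pivotal. $p$ is the set of pivotal indices of $A$, $q$ the set of non-pivotal indices, and $\tilde q=\{\min\varrho\mid\varrho\in q/(n)\}$ the set of basic non-pivotal indices (minimal elements of the classes of $q$ modulo $n$). Every non-pivotal column $A_{*i}$ is uniquely a linear combination $A_{*i}=\sum_{\{j\in p\mid j<i\}}\alpha^{(i)}_jA_{*j}$ of preceding pivotal columns. Define $V\in\mathbb{K}^{n(d+1)\times n(d+1)}$ with columns $v_i$: for $i\in p$, $v_i=e_i$; for $i\in q$, $v_i=\sum_{\{j\in p\mid j<i\}}\alpha^{(i)}_j e_j$, where $e_i$ is the $i$-th standard basis vector. For $i\in q$, $b_i=e_i-v_i$. For $v\in\mathbb{K}^{n(d+1)}$ in blocks $v=[w_0;\dots;w_d]$ with $w_i\in\mathbb{K}^n$, $v^\flat=\sum_{i=0}^d s^i w_i\in\mathbb{K}[s]^n$. *)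

From HB Require Import structures.
From mathcomp Require Import all_boot all_order all_algebra.
Set Implicit Arguments. Unset Strict Implicit. Unset Printing Implicit Defensive.
Import Order.TTheory GRing.Theory Num.Theory.
Local Open Scope ring_scope.

(* Conventions: all indices are 0-based (row i-1, column j-1 of the paper
   become row i, column j here). *)

Section Defs.
Variable K : fieldType.

Definition rvdeg n (a : 'rV[{poly K}]_n) : nat :=
  (\max_(r < n) (size (a ord0 r)).-1)%N.

Definition aent n (a : 'rV[{poly K}]_n) (r : nat) : {poly K} :=
  if insub r is Some r' then a ord0 r' else 0.

(* The matrix A: entry (i, k*n + r) is the r-th entry of c_(i-k)
   (zero if i-k is not in {0..d}); c_j = j-th coefficient vector of a. *)
Definition Amat n d (a : 'rV[{poly K}]_n) : 'M[K]_(d.*2.+1, n * d.+1) :=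
  \matrix_(i < d.*2.+1, j < n * d.+1)
     if (j %/ n <= i)%N then (aent a (j %% n))`_(i - j %/ n) else 0.

(* column j is pivotal: it is not in the span of the previous columns
   (for j = 0 this span is {0}, so it means column 0 is non-zero) *)
Definition pivotal m N (A : 'M[K]_(m, N)) (j : 'I_N) : bool :=
  ~~ (row j A^T <= (\sum_(i < N | (i < j)%N) <<row i A^T>>)%MS)%MS.

(* nat-indexed membership in q (false for out-of-range indices) *)
Definition nonpivn m N (A : 'M[K]_(m, N)) (x : nat) : bool :=
  if insub x is Some x' then ~~ pivotal A x' else false.

Definition basic_nonpiv m N (A : 'M[K]_(m, N)) (n : nat) (i : 'I_N) : bool :=
  ~~ pivotal A i &&
  [forall j : 'I_N, (~~ pivotal A j && (j == i %[mod n])) ==> (i <= j)%N].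

Definition is_coef m N (A : 'M[K]_(m, N)) (i : 'I_N) (al : 'I_N -> K) : Prop :=
  (forall j, al j != 0 -> pivotal A j && (j < i)%N) /\
  col i A = \sum_(j < N) al j *: col j A.

Definition Vmat m N (A : 'M[K]_(m, N)) (alpha : 'I_N -> 'I_N -> K) : 'M[K]_N :=
  \matrix_(r < N, i < N)
     if pivotal A i then (r == i)%:R else alpha i r.

Definition bvec m N (A : 'M[K]_(m, N)) (alpha : 'I_N -> 'I_N -> K) (i : 'I_N)
  : 'cV[K]_N := delta_mx i 0 - col i (Vmat A alpha).

Definition bvecn m N (A : 'M[K]_(m, N)) (alpha : 'I_N -> 'I_N -> K) (x : nat)
  : 'cV[K]_N := if insub x is Some x' then bvec A alpha x' else 0.

Definition vat N (v : 'cV[K]_N) (x : nat) : K :=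
  if insub x is Some x' then v x' ord0 else 0.

(* v^flat = sum_k s^k w_k, where v = [w_0; ...; w_d], w_k in K^n *)
Definition flat n d (v : 'cV[K]_(n * d.+1)) : 'rV[{poly K}]_n :=
  \row_(r < n) \poly_(k < d.+1) vat v (k * n + r).

End Defs.

From HB Require Import structures.
From mathcomp Require Import all_boot all_order all_algebra.
From mathcomp Require Import zify.
Import Order.TTheory GRing.Theory Num.Theory.
Local Open Scope ring_scope.
Set Implicit Arguments. Unset Strict Implicit. Unset Printing Implicit Defensive.

(* Shifting a column index of A by k*n shifts that column down by k rows, so A
   maps \sum_j alpha_j v_(j+kn) to the column iota+kn of A.  That vector and
   v_(iota+kn) are both supported on pivotal indices, where A is injective, so
   they coincide.  Flattening turns e_(j+kn) into s^k e_j^flat, and the terms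
   with j+kn pivotal drop out because then b_(j+kn) = 0. *)

Section PivotalColumns.
Variables (F : fieldType) (m N : nat) (A : 'M[F]_(m, N)).

Lemma mulmx_sum_col (x : 'cV[F]_N) : A *m x = \sum_r x r 0 *: col r A.
Proof.
by apply/colP => i; rewrite !(mxE, summxE); apply: eq_bigr => r _; rewrite !mxE mulrC.
Qed.

Lemma nonpivotal_comb (i : 'I_N) (x : 'cV[F]_N) :
  (forall r, x r 0 != 0 -> (r < i)%N) -> A *m x = col i A -> ~~ pivotal A i.
Proof.
move=> x_lt_i Ax; rewrite /pivotal negbK -tr_col -Ax mulmx_sum_col raddf_sum /=.
apply: summx_sub => r _; rewrite linearZ /= tr_col.
have [->|xr_neq0] := eqVneq (x r 0) 0; first by rewrite scale0r sub0mx.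
by apply/scalemx_sub/(sumsmx_sup r); rewrite ?x_lt_i ?genmxE.
Qed.

Definition pivotal_supported (x : 'cV[F]_N) : Prop :=
  forall r, ~~ pivotal A r -> x r 0 = 0.

Lemma pivotal_comb_eq0 (x : 'cV[F]_N) :
  pivotal_supported x -> A *m x = 0 -> x = 0.
Proof.
move=> x_piv Ax0; apply/colP => r0; rewrite mxE; apply/eqP/negPn/negP => xr0.
have [j xj_neq0 j_max] := @arg_maxnP _ r0 [pred r | x r 0 != 0] val xr0.
pose y := - (x j 0)^-1 *: (x - x j 0 *: delta_mx j 0).
suff /negP[] : ~~ pivotal A j by apply: contraR xj_neq0 => /x_piv ->.
apply: (@nonpivotal_comb j y).
  move=> r; rewrite !mxE; have [->|r_neq_j] := eqVneq r j.
    by rewrite eqxx mulr1 subrr mulr0 eqxx.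
  rewrite mulr0 subr0 mulf_eq0 negb_or => /andP[_ /j_max r_le_j].
  by rewrite ltn_neqAle; apply/andP; split; [exact: r_neq_j | exact: r_le_j].
rewrite -scalemxAr mulmxBr Ax0 -scalemxAr -colE sub0r scalerN scaleNr opprK.
by rewrite scalerA mulVf ?scale1r.
Qed.

Lemma pivotal_comb_inj (x y : 'cV[F]_N) :
  pivotal_supported x -> pivotal_supported y -> A *m x = A *m y -> x = y.
Proof.
move=> x_piv y_piv Axy; apply/eqP; rewrite -subr_eq0; apply/eqP.
apply: pivotal_comb_eq0; last by rewrite mulmxBr Axy subrr.
by move=> r r_np; rewrite !mxE (x_piv r r_np) (y_piv r r_np) subrr.
Qed.

End PivotalColumns.

Definition shift_mx (R : pzRingType) (m k : nat) : 'M[R]_m :=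
  \matrix_(i, i') ((i' + k)%N == i)%:R.

Lemma col_Amat_shift (K : fieldType) n d (a : 'rV[{poly K}]_n)
    (j j' : 'I_(n * d.+1)) k :
  (0 < n)%N -> j' = (j + k * n)%N :> nat ->
  col j' (Amat d a) = @shift_mx _ _ k *m col j (Amat d a).
Proof.
move=> n_gt0 j'E; apply/colP => i; rewrite /shift_mx !mxE.
have -> : (j' %/ n = j %/ n + k)%N by rewrite j'E addnC divnMDl // addnC.
have -> : (j' %% n = j %% n)%N by rewrite j'E addnC modnMDl.
have [k_le_i|i_lt_k] := leqP k i.
  have ik_lt : (i - k < d.*2.+1)%N by apply: leq_ltn_trans (leq_subr _ _) (ltn_ord i).
  rewrite (bigD1 (Ordinal ik_lt)) //= big1 ?addr0; last first.
    move=> i' i'_neq; rewrite !mxE; have [i'E|] := eqP; last by rewrite mul0r.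
    by case/eqP: i'_neq; apply: val_inj; rewrite /= -i'E addnK.
  by rewrite !mxE subnK // eqxx mul1r /= leq_subRL // (addnC k) subnDA subnAC.
rewrite big1; last first.
  move=> i' _; rewrite !mxE; case: eqP => [i'E|]; last by rewrite mul0r.
  by move: i_lt_k; rewrite -i'E ltnNge leq_addl.
by rewrite ifF // ltn_geF // (leq_trans i_lt_k) ?leq_addl.
Qed.

Section Flatten.
Variables (K : fieldType) (n d : nat).
Local Notation N := (n * d.+1)%N.

Lemma vatB (u v : 'cV[K]_N) x : vat (u - v) x = vat u x - vat v x.
Proof. by rewrite /vat; case: insub => [x'|]; rewrite ?mxE ?subr0. Qed.

Lemma vatZ c (v : 'cV[K]_N) x : vat (c *: v) x = c * vat v x.
Proof. by rewrite /vat; case: insub => [x'|]; rewrite ?mxE ?mulr0. Qed.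

Lemma flat_is_zmod_morphism : zmod_morphism (@flat K n d).
Proof.
move=> u v; apply/rowP => r; rewrite !mxE; apply/polyP => m.
by rewrite coefB !coef_poly; case: ifP; rewrite ?vatB ?subr0.
Qed.

HB.instance Definition _ :=
  GRing.isZmodMorphism.Build _ _ (@flat K n d) flat_is_zmod_morphism.

Lemma flat0 : flat (0 : 'cV[K]_N) = 0.
Proof. exact: raddf0. Qed.

Lemma flatB (u v : 'cV[K]_N) : flat (u - v) = flat u - flat v.
Proof. exact: raddfB. Qed.

Lemma flat_sum (I : finType) (F : I -> 'cV[K]_N) :
  flat (\sum_i F i) = \sum_i flat (F i).
Proof. exact: raddf_sum. Qed.

Lemma flatZ c (v : 'cV[K]_N) : flat (c *: v) = c%:P *: flat v.
Proof.
apply/rowP => r; rewrite !mxE; apply/polyP => m.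
by rewrite coefCM !coef_poly; case: ifP; rewrite ?vatZ ?mulr0.
Qed.

Definition evecn (x : nat) : 'cV[K]_N :=
  if insub x is Some x' then delta_mx x' 0 else 0.

Lemma evecn_ord (x : 'I_N) : evecn x = delta_mx x 0.
Proof. by rewrite /evecn valK. Qed.

Lemma vat_evecn x y : vat (evecn x) y = ((y == x) && (x < N)%N)%:R.
Proof.
rewrite /vat /evecn; case: insubP => [y' y_lt <-|/negbTE y_ge]; last first.
  by case: eqP => // <-; rewrite y_ge.
case: insubP => [x' _ <-|/negbTE x_ge]; first by rewrite mxE ltn_ord andbT.
by rewrite mxE x_ge andbF.
Qed.

Lemma eq_mulnD (m r y : nat) : (r < n)%N ->
  ((m * n + r)%N == y) = (m == y %/ n)%N && (r == y %% n)%N.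
Proof.
move=> r_lt; apply/eqP/andP => [<-|[/eqP -> /eqP ->]]; last by rewrite -divn_eq.
have n_gt0 : (0 < n)%N by apply: leq_ltn_trans r_lt.
by rewrite divnMDl // divn_small // addn0 modnMDl modn_small.
Qed.

Lemma flat_evecn x : (x < N)%N ->
  flat (evecn x) = \row_(r < n) (if r == (x %% n)%N :> nat then 'X^(x %/ n) else 0).
Proof.
move=> x_lt; have n_gt0 : (0 < n)%N by move: x_lt; case: n => //; rewrite mul0n.
have xq_lt : (x %/ n < d.+1)%N by rewrite ltn_divLR // mulnC.
apply/rowP => r; rewrite !mxE; apply/polyP => m.
rewrite coef_poly vat_evecn eq_mulnD // x_lt andbT.
have [->|m_neq] := eqVneq m (x %/ n)%N.
  by rewrite xq_lt /=; case: ifP; rewrite ?coefXn ?eqxx ?coef0.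
by rewrite /=; case: ifP; case: ifP; rewrite ?coef0 ?coefXn ?(negbTE m_neq).
Qed.

Lemma flat_evecn_shift x k : (x + k * n < N)%N ->
  flat (evecn (x + k * n)) = 'X^k *: flat (evecn x).
Proof.
move=> xk_lt; have x_lt : (x < N)%N by apply: leq_ltn_trans xk_lt; apply: leq_addr.
have n_gt0 : (0 < n)%N by move: x_lt; case: n => //; rewrite mul0n.
rewrite !flat_evecn // addnC divnMDl // modnMDl; apply/rowP => r; rewrite !mxE.
by case: ifP; rewrite ?mulr0 // exprD.
Qed.

End Flatten.

Section ShiftedNonpivotalColumns.
Variables (K : fieldType) (n d : nat) (a : 'rV[{poly K}]_n)
  (alpha : 'I_(n * d.+1) -> 'I_(n * d.+1) -> K).
Local Notation N := (n * d.+1)%N.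
Local Notation A := (Amat d a).
Local Notation V := (Vmat A alpha).
Local Notation evecn := (evecn K n d).
Hypothesis alpha_coef : forall i : 'I_N, ~~ pivotal A i -> is_coef A i (alpha i).

Lemma colV_pivotal (x : 'I_N) : pivotal A x -> col x V = delta_mx x 0.
Proof. by move=> x_piv; apply/colP => r; rewrite !mxE x_piv andbT. Qed.

Lemma mulmx_colV (x : 'I_N) : A *m col x V = col x A.
Proof.
have [x_piv|x_np] := boolP (pivotal A x); first by rewrite colV_pivotal // -colE.
have [_ ->] := alpha_coef x_np.
by rewrite mulmx_sum_col; apply: eq_bigr => r _; rewrite !mxE (negbTE x_np).
Qed.

Lemma colV_supported (x : 'I_N) : pivotal_supported A (col x V).
Proof.
move=> r r_np; rewrite !mxE; have [x_piv|x_np] := boolP (pivotal A x).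
  by case: eqP => // rx; rewrite rx x_piv in r_np.
have [alpha_supp _] := alpha_coef x_np.
by apply/eqP; apply: contraR r_np => /alpha_supp /andP[].
Qed.

Definition vvecn (x : nat) : 'cV[K]_N :=
  if insub x is Some x' then col x' V else 0.

Lemma vvecn_lt x (x_lt : (x < N)%N) : vvecn x = col (Ordinal x_lt) V.
Proof. by rewrite /vvecn insubT. Qed.

Lemma bvecnE x : bvecn A alpha x = evecn x - vvecn x.
Proof. by rewrite /bvecn /evecn /vvecn; case: insub => [x'|]; rewrite ?subr0. Qed.

Lemma bvecn_pivotal x : ~~ nonpivn A x -> bvecn A alpha x = 0.
Proof.
rewrite /nonpivn /bvecn; case: insub => // x'; rewrite negbK => x_piv.
by rewrite /bvec colV_pivotal // subrr.
Qed.

Lemma bvec_nonpivotal (i : 'I_N) : ~~ pivotal A i ->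
  bvec A alpha i = evecn i - \sum_j alpha i j *: evecn j.
Proof.
move=> i_np; rewrite /bvec evecn_ord; congr (_ - _); apply/colP => r.
rewrite !mxE (negbTE i_np) summxE (bigD1 r) //= big1 => [|j j_neq_r].
  by rewrite evecn_ord !mxE eqxx mulr1 addr0.
by rewrite evecn_ord !mxE eq_sym (negbTE j_neq_r) mulr0.
Qed.

Section Shift.
Variables (i : 'I_N) (k : nat).
Hypotheses (n_gt0 : (0 < n)%N) (i_np : ~~ pivotal A i) (ik_lt : (i + k * n < N)%N).

Lemma alpha_shift_lt (j : 'I_N) : alpha i j != 0 -> (j + k * n < N)%N.
Proof.
have [alpha_supp _] := alpha_coef i_np.
by move=> /alpha_supp /andP[_ j_lt_i]; apply: leq_ltn_trans ik_lt; rewrite leq_add2r ltnW.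
Qed.

Definition shifted_comb : 'cV[K]_N := \sum_j alpha i j *: vvecn (j + k * n).

Lemma mulmx_shifted_comb : A *m shifted_comb = col (Ordinal ik_lt) A.
Proof.
have [_ col_i] := alpha_coef i_np.
rewrite (@col_Amat_shift _ _ _ a i (Ordinal ik_lt) k n_gt0 erefl).
rewrite col_i !mulmx_sumr; apply: eq_bigr => j _.
have [->|alpha_neq0] := eqVneq (alpha i j) 0; first by rewrite !scale0r !mulmx0.
have jk_lt := alpha_shift_lt alpha_neq0.
by rewrite -!scalemxAr (vvecn_lt jk_lt) mulmx_colV
  (@col_Amat_shift _ _ _ a j (Ordinal jk_lt) k n_gt0 erefl).
Qed.

Lemma shifted_comb_eq0 (r : 'I_N) :
  (forall j, alpha i j != 0 -> vvecn (j + k * n) r 0 = 0) -> shifted_comb r 0 = 0.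
Proof.
move=> vvecn_eq0; rewrite summxE big1 // => j _; rewrite mxE.
by have [->|/vvecn_eq0 ->] := eqVneq (alpha i j) 0; rewrite ?mul0r ?mulr0.
Qed.

Lemma shifted_comb_supported : pivotal_supported A shifted_comb.
Proof.
move=> r r_np; apply: shifted_comb_eq0 => j /alpha_shift_lt jk_lt.
by rewrite (vvecn_lt jk_lt) colV_supported.
Qed.

Lemma vvecn_shift : vvecn (i + k * n) = shifted_comb.
Proof.
rewrite (vvecn_lt ik_lt); apply: pivotal_comb_inj.
- exact: colV_supported.
- exact: shifted_comb_supported.
- by rewrite mulmx_colV mulmx_shifted_comb.
Qed.

Lemma flat_alpha_vvecn_shift (j : 'I_N) :
  (alpha i j)%:P *: flat (vvecn (j + k * n)) =
  'X^k *: flat (alpha i j *: evecn j)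
  - (alpha i j)%:P *: flat (bvecn A alpha (j + k * n)).
Proof.
have [->|/alpha_shift_lt jk_lt] := eqVneq (alpha i j) 0.
  by rewrite !polyC0 !scale0r flat0 scaler0 subr0.
rewrite flatZ scalerA mulrC -scalerA -flat_evecn_shift // bvecnE flatB scalerBr.
by rewrite opprB addrC subrK.
Qed.

Lemma flat_bvecn_shift :
  flat (bvecn A alpha (i + k * n)) =
  'X^k *: flat (bvec A alpha i)
  + \sum_j (alpha i j)%:P *: flat (bvecn A alpha (j + k * n)).
Proof.
rewrite bvecnE vvecn_shift bvec_nonpivotal // !flatB !flat_sum.
under eq_bigr do rewrite flatZ flat_alpha_vvecn_shift.
rewrite sumrB -scaler_sumr scalerBr -flat_evecn_shift //.
by rewrite opprB addrA addrAC.
Qed.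

End Shift.
End ShiftedNonpivotalColumns.

Theorem lemma8 (K : fieldType) (n d : nat) (a : 'rV[{poly K}]_n)
  (alpha : 'I_(n * d.+1) -> 'I_(n * d.+1) -> K) :
  (1 < n)%N ->
  a != 0 ->
  rvdeg a = d ->
  (forall i : 'I_(n * d.+1), ~~ pivotal (Amat d a) i ->
     is_coef (Amat d a) i (alpha i)) ->
  forall (iota : 'I_(n * d.+1)) (k : nat),
  basic_nonpiv (Amat d a) n iota ->
  (k <= (n * d.+1 - iota.+1) %/ n)%N ->
  flat (bvecn (Amat d a) alpha (iota + k * n)) =
    'X^k *: flat (bvec (Amat d a) alpha iota) +
    \sum_(j < n * d.+1 | pivotal (Amat d a) j && (j < iota)%N &&
                         nonpivn (Amat d a) (j + k * n))
       (alpha iota j)%:P *: flat (bvecn (Amat d a) alpha (j + k * n)).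
Proof.
move=> n_gt1 _ _ alpha_coef iota k /andP[iota_np _] k_le.
have n_gt0 : (0 < n)%N by apply: ltnW.
have ik_lt : (iota + k * n < n * d.+1)%N.
  by move: k_le; rewrite leq_divRL // => k_le; have := ltn_ord iota; lia.
rewrite (flat_bvecn_shift alpha_coef n_gt0 iota_np ik_lt); congr (_ + _).
rewrite [RHS]big_mkcond; apply: eq_bigr => j _; case: ifP => // j_out.
have [->|alpha_neq0] := eqVneq (alpha iota j) 0; first by rewrite polyC0 scale0r.
have [alpha_supp _] := alpha_coef iota iota_np.
have /andP[j_piv j_lt] := alpha_supp j alpha_neq0.
rewrite j_piv j_lt /= in j_out.
by rewrite bvecn_pivotal ?flat0 ?scaler0 // j_out.
Qed.
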